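(* In any symmetric $2\times 2$ game (a symmetric two-player game $(X,\pi)$ with $|X|=2$), imitation is essentially unbeatable.
   Context: $\pi:X\times X\to\mathbb{R}$, $\pi(x,y)$ = payoff of the player choosing $x$ against $y$. Relative payoff: $\Delta(x,y)=\pi(x,y)-\pi(y,x)$, and $\hat\Delta:=\max_{x,y\in X}\Delta(x,y)$. Imitate-the-best: given initial $y_0\in X$ and any opponent sequence $(x_t)_{t\ge0}$ in $X$, $y_t=x_{t-1}$ if $\Delta(x_{t-1},y_{t-1})>0$ and $y_t=y_{t-1}$ otherwise. Imitation is essentially unbeatable if for every $y_0\in X$ and every sequence $(x_t)$, $\limsup_{T\to\infty}\sum_{t=0}^T\Delta(x_t,y_t)\le\hat\Delta$. *)

From Stdlib Require Import Reals.
From Coquelicot Require Import Coquelicot.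
Open Scope R_scope.

Definition rel_payoff {X : Type} (pi : X -> X -> R) (x y : X) : R :=
  pi x y - pi y x.

Definition is_max_rel_payoff {X : Type} (pi : X -> X -> R) (hatD : R) : Prop :=
  (exists x y, rel_payoff pi x y = hatD) /\
  (forall x y, rel_payoff pi x y <= hatD).

Fixpoint imitate {X : Type} (pi : X -> X -> R) (y0 : X) (xs : nat -> X)
  (t : nat) : X :=
  match t with
  | O => y0
  | S t' => let y := imitate pi y0 xs t' in
            if Rlt_dec 0 (rel_payoff pi (xs t') y) then xs t' else y
  end.

Definition cum_rel_payoff {X : Type} (pi : X -> X -> R) (y0 : X) (xs : nat -> X)
  (T : nat) : R :=
  sum_f_R0 (fun t => rel_payoff pi (xs t) (imitate pi y0 xs t)) T.

Definition ess_unbeatable {X : Type} (pi : X -> X -> R) (hatD : R) : Prop :=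
  forall (y0 : X) (xs : nat -> X),
    Rbar_le (LimSup_seq (cum_rel_payoff pi y0 xs)) (Finite hatD).

(** A strategy [u] with [rel_payoff pi u v > 0] for some [v] is never beaten
    when [X] has two elements: [v] is then the other strategy and
    [rel_payoff pi v u = - rel_payoff pi u v < 0].  Imitate-the-best only moves
    to a strategy that has just won, and never leaves an unbeaten one, so at
    most one round yields the opponent a positive relative payoff, and that
    payoff is at most [hatD].  Hence every partial sum is at most
    [max 0 hatD = hatD]. *)

From Stdlib Require Import Reals Lra Lia.
From Coquelicot Require Import Coquelicot.
Open Scope R_scope.

Definition unbeaten {X : Type} (pi : X -> X -> R) (u : X) : Prop :=
  forall x, rel_payoff pi x u <= 0.

Lemma rel_payoff_diag {X : Type} (pi : X -> X -> R) (x : X) :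
  rel_payoff pi x x = 0.
Proof. unfold rel_payoff; ring. Qed.

Lemma rel_payoff_antisym {X : Type} (pi : X -> X -> R) (x y : X) :
  rel_payoff pi x y = - rel_payoff pi y x.
Proof. unfold rel_payoff; ring. Qed.

Lemma winner_unbeaten_two (X : Type) (a b : X)
  (hX : forall x : X, x = a \/ x = b) (pi : X -> X -> R) (u v : X) :
  0 < rel_payoff pi u v -> unbeaten pi u.
Proof.
  intros Huv x.
  destruct (hX x) as [-> | ->], (hX u) as [-> | ->], (hX v) as [-> | ->];
    rewrite ?rel_payoff_diag in *; try lra;
    rewrite rel_payoff_antisym; lra.
Qed.

Section Imitation.

Variables (X : Type) (pi : X -> X -> R) (y0 : X) (xs : nat -> X).

Let y := imitate pi y0 xs.

Lemma imitate_S_gain (n : nat) :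
  0 < rel_payoff pi (xs n) (y n) -> y (S n) = xs n.
Proof.
  intros H; unfold y; simpl; fold (y n).
  destruct (Rlt_dec 0 _); [reflexivity | contradiction].
Qed.

Lemma imitate_S_unbeaten (n : nat) : unbeaten pi (y n) -> y (S n) = y n.
Proof.
  intros H; unfold y; simpl; fold (y n).
  destruct (Rlt_dec 0 _) as [Hlt | _]; [| reflexivity].
  specialize (H (xs n)); lra.
Qed.

Lemma imitate_unbeaten_after (n m : nat) :
  (n <= m)%nat -> unbeaten pi (y n) -> unbeaten pi (y m).
Proof.
  induction 1 as [| m _ IH]; intros H; [exact H |].
  rewrite imitate_S_unbeaten; auto.
Qed.

Hypothesis winner_unbeaten :
  forall u v, 0 < rel_payoff pi u v -> unbeaten pi u.

Lemma imitate_single_gain (n m : nat) :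
  0 < rel_payoff pi (xs n) (y n) -> (n < m)%nat ->
  rel_payoff pi (xs m) (y m) <= 0.
Proof.
  intros Hgain Hnm.
  apply (imitate_unbeaten_after (S n)); [exact Hnm |].
  rewrite imitate_S_gain by exact Hgain.
  exact (winner_unbeaten _ _ Hgain).
Qed.

End Imitation.

Lemma sum_f_R0_le_single_gain (d : nat -> R) (D : R) :
  0 <= D -> (forall n, d n <= D) ->
  (forall n m, 0 < d n -> (n < m)%nat -> d m <= 0) ->
  forall T, sum_f_R0 d T <= D.
Proof.
  intros HD Hbound Hsingle T.
  assert (Hinv : sum_f_R0 d T <= 0 \/
                 (sum_f_R0 d T <= D /\ forall m, (T < m)%nat -> d m <= 0)).
  { induction T as [| T [Hle | [Hle Htail]]]; simpl.
    - destruct (Rle_dec (d 0%nat) 0); [left; lra |].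
      right; split; [apply Hbound |].
      intros m; apply Hsingle; lra.
    - destruct (Rle_dec (d (S T)) 0); [left; lra |].
      right; split; [specialize (Hbound (S T)); lra |].
      intros m; apply Hsingle; lra.
    - right; split.
      + specialize (Htail (S T) (Nat.lt_succ_diag_r T)); lra.
      + intros m Hm; apply Htail; lia. }
  destruct Hinv as [Hle | [Hle _]]; lra.
Qed.

Lemma LimSup_seq_le_bound (u : nat -> R) (D : R) :
  (forall n, u n <= D) -> Rbar_le (LimSup_seq u) (Finite D).
Proof.
  intros Hu; rewrite <- (LimSup_seq_const D).
  apply LimSup_le; exists 0%nat; intros n _; apply Hu.
Qed.

Theorem proposition2 (X : Type) (a b : X) (hab : a <> b)
  (hX : forall x : X, x = a \/ x = b)
  (pi : X -> X -> R) (hatD : R) (hD : is_max_rel_payoff pi hatD) :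
  ess_unbeatable pi hatD.
Proof.
  destruct hD as [_ hmax].
  intros y0 xs.
  apply LimSup_seq_le_bound, sum_f_R0_le_single_gain.
  - specialize (hmax a a); rewrite rel_payoff_diag in hmax; exact hmax.
  - intros n; apply hmax.
  - intros n m; apply imitate_single_gain.
    exact (winner_unbeaten_two X a b hX pi).
Qed.
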